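(* In the setting below, for all $j\in\mathcal{S}$ and all $x\in\mathbb{R}^{|\mathcal{S}|}$, if $\|(\mathrm{Id}-B_j)x\|=\|x\|$ then $x\in\operatorname{span}(M^{1/2}_{:,j})^\perp$.
   Context: Setting: $f:\mathbb{R}^p\to\mathbb{R}$ convex, differentiable with Lipschitz gradient; $g_j:\mathbb{R}\to\mathbb{R}\cup\{+\infty\}$ proper closed convex; $x^\star$ a minimizer of $f(x)+\sum_jg_j(x_j)$; $\mathcal{S}=\{j:\partial g_j(x^\star_j)\text{ is a singleton}\}$; $g_j$ is $\mathcal{C}^2$ near $x^\star_j$ for $j\in\mathcal{S}$, $f$ is $\mathcal{C}^2$ near $x^\star$, and $\nabla^2_{\mathcal{S},\mathcal{S}}f(x^\star)\succ0$. Step sizes $0<\gamma_j\le1/L_j$, $L_j$ the coordinatewise Lipschitz constant of $\nabla_jf$. For $j\in\mathcal{S}$, $z^\star_j=x^\star_j-\gamma_j\nabla_jf(x^\star)$, $p_j>0$ the derivative of $\operatorname{prox}_{\gamma_jg_j}$ at $z^\star_j$, $u_j=\frac1{\gamma_jp_j}-\frac1{\gamma_j}$, $M=\nabla^2_{\mathcal{S},\mathcal{S}}f(x^\star)+\operatorname{diag}(u)$ (symmetric positive definite), $M^{1/2}$ its symmetric square root, and $B_j=\gamma_jp_j\,M^{1/2}_{:,j}(M^{1/2}_{:,j})^\top$. $\|\cdot\|$ is the Euclidean norm. *)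

From HB Require Import structures.
From mathcomp Require Import all_boot all_order all_algebra.
From mathcomp Require Import all_classical all_reals all_analysis.
Set Implicit Arguments. Unset Strict Implicit. Unset Printing Implicit Defensive.
Import Order.TTheory GRing.Theory Num.Theory.
Import numFieldNormedType.Exports.
Local Open Scope classical_set_scope.
Local Open Scope ring_scope.

Section Defs.
Variable R : realType.

Definition enorm (m n : nat) (A : 'M[R]_(m, n)) : R :=
  Num.sqrt (\sum_(i < m) \sum_(j < n) A i j ^+ 2).

Definition ecoord (p : nat) (j : 'I_p) : 'rV[R]_p := delta_mx 0 j.

Definition partial (p : nat) (f : 'rV[R]_p -> R) (j : 'I_p) (x : 'rV[R]_p) : R :=
  derive f x (ecoord j).

Definition grad (p : nat) (f : 'rV[R]_p -> R) (x : 'rV[R]_p) : 'rV[R]_p :=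
  \row_j partial f j x.

Definition hess (p : nat) (f : 'rV[R]_p -> R) (i j : 'I_p) (x : 'rV[R]_p) : R :=
  derive (partial f j) x (ecoord i).

Definition convex_fun (p : nat) (f : 'rV[R]_p -> R) : Prop :=
  forall (x y : 'rV[R]_p) (t : R), 0 <= t <= 1 ->
    f (t *: x + (1 - t) *: y) <= t * f x + (1 - t) * f y.

Definition smooth_Lip_grad (p : nat) (f : 'rV[R]_p -> R) : Prop :=
  (forall x, differentiable f x) /\
  exists Lf : R, forall x y, enorm (grad f x - grad f y) <= Lf * enorm (x - y).

Definition coord_lip_const (p : nat) (f : 'rV[R]_p -> R) (j : 'I_p) (L : R) : Prop :=
  0 <= L /\ forall (x : 'rV[R]_p) (t : R),
    `| partial f j (x + t *: ecoord j) - partial f j x | <= L * `|t|.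

Definition is_coord_lip (p : nat) (f : 'rV[R]_p -> R) (j : 'I_p) (L : R) : Prop :=
  coord_lip_const f j L /\ forall L', coord_lip_const f j L' -> L <= L'.

Definition C2_near (p : nat) (f : 'rV[R]_p -> R) (x : 'rV[R]_p) : Prop :=
  exists2 e : R, 0 < e & forall y : 'rV[R]_p, ball x e y ->
    forall i j : 'I_p, derivable f y (ecoord j) /\
      derivable (partial f j) y (ecoord i) /\
      {for y, continuous (hess f i j)}.

Definition proper_fun (g : R -> \bar R) : Prop :=
  (forall x, g x != -oo%E) /\ exists x, g x \is a fin_num.

Definition closed_fun (g : R -> \bar R) : Prop :=
  closed [set xy : R * R | (g xy.1 <= (xy.2)%:E)%E].

Definition convex_efun (g : R -> \bar R) : Prop :=
  forall (x y t : R), 0 <= t <= 1 ->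
    (g ((t * x + (1 - t) * y)%R) <= t%:E * g x + (1 - t)%:E * g y)%E.

Definition subdiff (g : R -> \bar R) (x : R) : set R :=
  [set s | forall y, (g x + ((s * (y - x))%R)%:E <= g y)%E].

Definition C2_near1 (g : R -> \bar R) (a : R) : Prop :=
  exists2 e : R, 0 < e & forall y : R, `|y - a| < e ->
    [/\ g y \is a fin_num, derivable (fine \o g) y 1,
        derivable (derive1 (fine \o g)) y 1
      & {for y, continuous (derive1 (derive1 (fine \o g)))}].

Definition objective (p : nat) (f : 'rV[R]_p -> R) (g : 'I_p -> R -> \bar R)
  (x : 'rV[R]_p) : \bar R := ((f x)%:E + \sum_(j < p) g j (x ord0 j))%E.

Definition Sset (p : nat) (g : 'I_p -> R -> \bar R) (xs : 'rV[R]_p) : {set 'I_p} :=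
  [set j | `[< exists s : R, subdiff (g j) (xs 0 j) = [set s] >] ].

Definition is_prox (gam : R) (g : R -> \bar R) (z x : R) : Prop :=
  forall y, (g x + (((x - z) ^+ 2 / (2 * gam))%R)%:E <= g y + (((y - z) ^+ 2 / (2 * gam))%R)%:E)%E.

End Defs.

(* With [q] the k-th column of the square root [Q] of [M] and [c = gam_k pd_k],
   the update [Id - B_k = Id - c q q^T] satisfies
   [|(Id - B_k) x|^2 = |x|^2 + (q^T x)^2 (c^2 |q|^2 - 2 c)], and
   [|q|^2 = M_kk = H_kk + 1/c - 1/gam_k].  Since [gam_k H_kk <= gam_k L_k <= 1],
   the coefficient [c^2 |q|^2 - 2 c = c (pd_k (gam_k H_kk - 1) - 1)] is negative,
   so preserving the norm of [x] forces [q^T x = 0]. *)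
From HB Require Import structures.
From mathcomp Require Import all_boot all_order all_algebra.
From mathcomp Require Import all_classical all_reals all_analysis.
From mathcomp Require Import ring.
Set Implicit Arguments. Unset Strict Implicit. Unset Printing Implicit Defensive.
Import Order.TTheory GRing.Theory Num.Theory.
Import numFieldNormedType.Exports.
Local Open Scope classical_set_scope.
Local Open Scope ring_scope.

Section RankOneUpdate.
Variables (R : realType) (n : nat).
Implicit Types (c : R) (q x : 'cV[R]_n).

Lemma enorm_cV_sqr x : enorm x ^+ 2 = \sum_i x i 0 ^+ 2.
Proof.
rewrite /enorm sqr_sqrtr; last by do 2!apply: sumr_ge0 => ? _; exact: sqr_ge0.
by apply: eq_bigr => i _; rewrite big_ord1.
Qed.

Lemma dot_cVE q x : (q^T *m x) 0 0 = \sum_i q i 0 * x i 0.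
Proof. by rewrite mxE; apply: eq_bigr => i _; rewrite mxE. Qed.

Lemma rank_one_update_apply c q x i :
  ((1%:M - c *: (q *m q^T)) *m x) i 0 = x i 0 - c * q i 0 * (q^T *m x) 0 0.
Proof.
rewrite mulmxBl mul1mx -scalemxAl -mulmxA !mxE big_ord1 !mxE.
by rewrite mulrA.
Qed.

Lemma enorm_rank_one_update_sqr c q x :
  enorm ((1%:M - c *: (q *m q^T)) *m x) ^+ 2 =
  enorm x ^+ 2 + (q^T *m x) 0 0 ^+ 2 * (c ^+ 2 * enorm q ^+ 2 - 2 * c).
Proof.
rewrite !enorm_cV_sqr; set s : R := (q^T *m x) 0 0.
under eq_bigr do rewrite rank_one_update_apply.
have -> : \sum_i (x i 0 - c * q i 0 * s) ^+ 2 =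
    \sum_i (x i 0 ^+ 2 + (c ^+ 2 * s ^+ 2 * q i 0 ^+ 2 - 2 * c * s * (q i 0 * x i 0))).
  by apply: eq_bigr => i _; ring.
rewrite big_split /= sumrB -!mulr_sumr -[\sum_i q i 0 * x i 0]dot_cVE -/s; ring.
Qed.

Lemma rank_one_update_isometry_orth c q x :
  enorm ((1%:M - c *: (q *m q^T)) *m x) = enorm x ->
  c ^+ 2 * enorm q ^+ 2 - 2 * c != 0 -> q^T *m x = 0.
Proof.
move=> /(congr1 (fun a => a ^+ 2)); rewrite enorm_rank_one_update_sqr.
move=> /eqP; rewrite -subr_eq0 addrAC subrr add0r mulf_eq0 sqrf_eq0 => /orP[/eqP s0 _|->//].
by apply/matrixP => i j; rewrite !ord1 s0 mxE.
Qed.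

End RankOneUpdate.

Lemma enorm_col_sqr (R : realType) (n : nat) (Q : 'M[R]_n) (k : 'I_n) :
  enorm (col k Q) ^+ 2 = (Q^T *m Q) k k.
Proof. by rewrite enorm_cV_sqr mxE; apply: eq_bigr => i _; rewrite !mxE expr2. Qed.

Lemma hess_le_coord_lip (R : realType) (p : nat) (f : 'rV[R]_p -> R) j L x :
  coord_lip_const f j L -> derivable (partial f j) x (ecoord R j) ->
  hess f j j x <= L.
Proof.
move=> [_ HL] dv; rewrite /hess /derive; apply: limr_le => //.
near=> h.
have h0 : h != 0 by near: h; exact: nbhs_dnbhs_neq.
rewrite /= /shift /= [_ + x]addrC.
apply: le_trans (ler_norm _) _.
rewrite normrZ normfV -ler_pdivlMl ?invr_gt0 ?normr_gt0 // invrK mulrC.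
exact: HL.
Unshelve. all: by end_near.
Qed.

Lemma rank_one_coef_lt0 (R : realFieldType) (gam pd h : R) :
  0 < gam -> 0 < pd -> gam * h <= 1 ->
  (gam * pd) ^+ 2 * (h + (1 / (gam * pd) - 1 / gam)) - 2 * (gam * pd) < 0.
Proof.
move=> gam0 pd0 gamh.
have -> : (gam * pd) ^+ 2 * (h + (1 / (gam * pd) - 1 / gam)) - 2 * (gam * pd) =
    gam * pd * (pd * (gam * h - 1) - 1).
  by field; rewrite !gt_eqF.
rewrite pmulr_rlt0 ?mulr_gt0 // subr_lt0; apply: le_lt_trans ltr01.
by rewrite pmulr_rle0 // subr_le0.
Qed.

Theorem lemma7 (R : realType) (p : nat)
  (f : 'rV[R]_p -> R) (g : 'I_p -> R -> \bar R) (xs : 'rV[R]_p)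
  (L gam : 'I_p -> R) (prox : 'I_p -> R -> R) (pd : 'I_p -> R)
  (Q : 'M[R]_#|Sset g xs|) :
  (* f convex, differentiable with Lipschitz gradient *)
  convex_fun f -> smooth_Lip_grad f ->
  (* g_j proper closed convex *)
  (forall j, [/\ proper_fun (g j), closed_fun (g j) & convex_efun (g j)]) ->
  (* xs minimizes f(x) + sum_j g_j(x_j) *)
  (forall y, (objective f g xs <= objective f g y)%E) ->
  (* regularity near xs *)
  (forall j, j \in Sset g xs -> C2_near1 (g j) (xs 0 j)) ->
  C2_near f xs ->
  (* Hessian of f restricted to S x S is positive definite *)
  (forall v : 'cV[R]_#|Sset g xs|, v != 0 ->
     0 < (v^T *m (\matrix_(a, b) hess f (enum_val a) (enum_val b) xs) *m v) 0 0) ->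
  (* L_j is the coordinatewise Lipschitz constant; 0 < gam_j <= 1/L_j *)
  (forall j, is_coord_lip f j (L j)) ->
  (forall j, 0 < gam j /\ gam j * L j <= 1) ->
  (* prox j = prox_{gam_j g_j} *)
  (forall j z, is_prox (gam j) (g j) z (prox j z)) ->
  (* pd_j > 0 is the derivative of prox_{gam_j g_j} at z*_j = xs_j - gam_j nabla_j f(xs) *)
  (forall j, j \in Sset g xs ->
     is_derive (xs 0 j - gam j * partial f j xs) 1 (prox j) (pd j) /\ 0 < pd j) ->
  (* Q = M^{1/2}: symmetric positive semidefinite square root of
     M = nabla^2_{S,S} f(xs) + diag(u),  u_j = 1/(gam_j pd_j) - 1/gam_j *)
  Q^T = Q ->
  (forall v : 'cV[R]_#|Sset g xs|, 0 <= (v^T *m Q *m v) 0 0) ->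
  Q *m Q = \matrix_(a, b) (hess f (enum_val a) (enum_val b) xs
             + (a == b)%:R * (1 / (gam (enum_val a) * pd (enum_val a))
                              - 1 / gam (enum_val a))) ->
  (* conclusion, for every j in S (indexed by k : 'I_|S|, j = enum_val k) *)
  forall (k : 'I_#|Sset g xs|) (x : 'cV[R]_#|Sset g xs|),
    let Bk := (gam (enum_val k) * pd (enum_val k)) *: (col k Q *m (col k Q)^T) in
    enorm ((1%:M - Bk) *m x) = enorm x ->
    forall w : 'rV[R]_#|Sset g xs|, (w <= (col k Q)^T)%MS -> (w *m x) 0 0 = 0.
Proof.
move=> _ _ _ _ _ [e e0 C2f] _ Lip Hgam _ Hprox QT _ QQ k x Bk Hn w /submxP[D ->].
set j := enum_val k.
have [_ [dv _]] := C2f xs (ballxx _ e0) j j.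
have [gam0 gamL] := Hgam j.
have [_ pd0] := Hprox j (enum_valP k).
have gamH : gam j * hess f j j xs <= 1.
  by apply: le_trans gamL; rewrite ler_pM2l // (hess_le_coord_lip (proj1 (Lip j)) dv).
have norm_qk : enorm (col k Q) ^+ 2 =
    hess f j j xs + (1 / (gam j * pd j) - 1 / gam j).
  by rewrite enorm_col_sqr QT QQ mxE eqxx [true%:R * _]mul1r.
rewrite -mulmxA (rank_one_update_isometry_orth Hn) ?mulmx0 ?mxE //.
by rewrite -/j norm_qk; apply/ltr0_neq0/rank_one_coef_lt0.
Qed.
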